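(* Let $q \geq 5$ be a prime power and let $\mathcal{X}$ be a plane curve of degree $q-1$ defined over $\mathbb{F}_q$ without $\mathbb{F}_q$-linear components with $\mathrm{N}_q(\mathcal{X}) = (q-1)^2$. Suppose $Q \in Z(\mathcal{X})$ is a point with $r = \psi_{q-1}(Q) \geq 2$, and let $l_1,\dots,l_r$ be the $\mathbb{F}_q$-lines through $Q$ containing exactly $q-1$ points of $\mathcal{X}(\mathbb{F}_q)$. Then the set $\bigcup_{i=1}^r \big((l_i(\mathbb{F}_q)\setminus\{Q\}) \cap Z(\mathcal{X})\big)$ is contained in a line.
   Context: $\mathcal{X}(\mathbb{F}_q)=\mathcal{X}\cap\mathbb{P}^2(\mathbb{F}_q)$, $\mathrm{N}_q(\mathcal{X})=\#\mathcal{X}(\mathbb{F}_q)$; ''without $\mathbb{F}_q$-linear components'' means no line defined over $\mathbb{F}_q$ is a component. $Z(\mathcal{X}) := \mathbb{P}^2(\mathbb{F}_q)\setminus\mathcal{X}(\mathbb{F}_q)$. For a point $P\in\mathbb{P}^2(\mathbb{F}_q)$ and $0\le i\le q+1$, $\psi_i(P)$ is the number of $\mathbb{F}_q$-lines $l$ through $P$ with $\#(l\cap\mathcal{X}(\mathbb{F}_q))=i$. *)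

From HB Require Import structures.
From mathcomp Require Import all_boot all_order all_algebra.
From mathcomp Require Import mpoly.
Set Implicit Arguments. Unset Strict Implicit. Unset Printing Implicit Defensive.
Import GRing.Theory.
Local Open Scope ring_scope.

(* Projective plane P^2(F): each point is represented by its unique
   normalized homogeneous coordinate vector (first nonzero coordinate = 1). *)
Definition normb (F : fieldType) (v : {ffun 'I_3 -> F}) : bool :=
  [exists i : 'I_3, (v i == 1) && [forall j : 'I_3, (j < i)%N ==> (v j == 0)]].

Definition pt (F : finFieldType) := {v : {ffun 'I_3 -> F} | normb v}.

(* F_q-lines of P^2, represented by normalized coefficient vectors (a0,a1,a2);
   the line is {a0 X0 + a1 X1 + a2 X2 = 0}. *)
Definition line (F : finFieldType) := pt F.

Definition on_line (F : finFieldType) (l : line F) (P : pt F) : bool :=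
  \sum_(i < 3) (val l) i * (val P) i == 0.

Definition linform (F : finFieldType) (l : line F) : {mpoly F[3]} :=
  \sum_(i < 3) (val l) i *: 'X_i.

Definition plane_curve (F : finFieldType) (d : nat) (C : {mpoly F[3]}) : Prop :=
  C != 0 /\ C \is d.-homog.

Definition no_Fq_linear_components (F : finFieldType) (C : {mpoly F[3]}) : Prop :=
  forall (l : line F) (G : {mpoly F[3]}), C <> linform l * G.

Definition Xpts (F : finFieldType) (C : {mpoly F[3]}) : {set pt F} :=
  [set P : pt F | C.@[fun i => (val P) i] == 0].

Definition Zpts (F : finFieldType) (C : {mpoly F[3]}) : {set pt F} :=
  ~: Xpts C.

Definition Nq (F : finFieldType) (C : {mpoly F[3]}) : nat := #|Xpts C|.

Definition lines_psi (F : finFieldType) (C : {mpoly F[3]}) (i : nat) (P : pt F)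
  : {set line F} :=
  [set l : line F | on_line l P && (#|[set R in Xpts C | on_line l R]| == i)].

Definition psi (F : finFieldType) (C : {mpoly F[3]}) (i : nat) (P : pt F) : nat :=
  #|lines_psi C i P|.

(* A line through Q carrying q - 1 points of X(F_q) has at most q + 1 points,
   so besides Q it contains at most one point of Z(X).  Take such points Pa,
   Pb, Pc on three distinct such lines la, lb, lc, and a line m through Pa and
   Pb.  Let H be a product of q - 2 linear forms of lines through Q: all lines
   through Q other than la, lb, lc, padded with copies of la.  The form
   G = C * m * H has degree 2(q - 1), so by Chevalley's argument its values
   over P^2(F_q) sum to 0.  But G vanishes at every point except possibly Pc:
   on X(F_q) because of C, on the lines of H (Q included), and at Pa, Pb
   because of m.  Hence G(Pc) = 0, and since C(Pc) and H(Pc) are nonzero, Pc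
   lies on m. *)

From mathcomp Require Import all_boot all_order all_algebra fingroup cyclic finfield.
From mathcomp Require Import mpoly ring.
Set Implicit Arguments. Unset Strict Implicit. Unset Printing Implicit Defensive.
Import GRing.Theory FinRing.Theory.
Local Open Scope ring_scope.

Section FiniteField.
Variable F : finFieldType.

Let card_gt0 : (0 < #|F|)%N := ltnW (card_finNzRing_gt1 F).

Lemma natr_card : #|F|%:R = 0 :> F.
Proof. by rewrite -[#|F|]cardsT -zmodXgE expg_cardG ?inE. Qed.

Lemma natr_card_pred : #|F|.-1%:R = -1 :> F.
Proof.
by apply/eqP; rewrite -addr_eq0 -(natrD _ _ 1) addn1 prednK // natr_card.
Qed.

Lemma expf_card_pred (c : F) : c != 0 -> c ^+ #|F|.-1 = 1.
Proof.
by move=> c0; apply: (mulIf c0); rewrite mul1r -exprSr prednK // expf_card.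
Qed.

Lemma exists_expr_neq1 k : (0 < k < #|F|.-1)%N ->
  exists2 a : F, a != 0 & a ^+ k != 1.
Proof.
case/andP=> k_gt0 k_lt; apply/exists_inP; apply: contraLR k_lt.
rewrite negb_exists_in -leqNgt => /forall_inP all_roots.
have Xk1_neq0 : 'X^k - 1 != 0 :> {poly F}.
  by rewrite -size_poly_eq0 size_XnsubC.
have := max_poly_roots Xk1_neq0 (rs := enum [pred x : F | x != 0]).
rewrite enum_uniq size_XnsubC // -cardE cardC1 ltnS; apply=> //.
apply/allP=> x; rewrite mem_enum inE => x_neq0.
by rewrite rootE !hornerE (eqP (negbNE (all_roots x x_neq0))) subrr.
Qed.

Lemma sum_expr_eq0 k : (k < #|F|.-1)%N -> \sum_(x : F) x ^+ k = 0.
Proof.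
case: k => [_|k k_lt].
  by rewrite (eq_bigr _ (fun _ _ => expr0 _)) sumr_const natr_card.
have [a a_neq0 ak_neq1] := exists_expr_neq1 (k_lt : (0 < k.+1 < _)%N).
have sum_fix : \sum_(x : F) x ^+ k.+1 = a ^+ k.+1 * \sum_(x : F) x ^+ k.+1.
  rewrite mulr_sumr (reindex_inj (mulfI a_neq0)) /=.
  by apply: eq_bigr => x _; rewrite exprMn.
apply/eqP; move/eqP: sum_fix; rewrite -subr_eq0 -{1}[\sum_x _]mul1r -mulrBl.
by rewrite mulf_eq0 subr_eq0 eq_sym (negbTE ak_neq1).
Qed.

End FiniteField.

Section Vectors.
Variable F : fieldType.
Local Notation V := {ffun 'I_3 -> F}.

Definition i0 : 'I_3 := ord0.
Definition i1 : 'I_3 := inord 1.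
Definition i2 : 'I_3 := ord_max.

Lemma ord3P (P : 'I_3 -> Prop) : P i0 -> P i1 -> P i2 -> forall i, P i.
Proof.
move=> P0 P1 P2 [[|[|[|//]]] i_lt].
- by rewrite (_ : Ordinal i_lt = i0) //; apply: val_inj.
- by rewrite (_ : Ordinal i_lt = i1) //; apply: val_inj; rewrite /= inordK.
- by rewrite (_ : Ordinal i_lt = i2) //; apply: val_inj.
Qed.

Definition scalev (c : F) (u : V) : V := [ffun i => c * u i].

Definition dot (u w : V) : F := \sum_(i < 3) u i * w i.

Definition cross (u w : V) : V := [ffun i : 'I_3 =>
  match nat_of_ord i with
  | 0 => u i1 * w i2 - u i2 * w i1
  | 1 => u i2 * w i0 - u i0 * w i2
  | _ => u i0 * w i1 - u i1 * w i0
  end].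

Lemma dotE u w : dot u w = u i0 * w i0 + u i1 * w i1 + u i2 * w i2.
Proof.
rewrite /dot !big_ord_recl big_ord0 addr0 addrA.
by congr (u _ * w _ + u _ * w _ + u _ * w _); apply: val_inj; rewrite //= inordK.
Qed.

Lemma crossE u w :
  [/\ cross u w i0 = u i1 * w i2 - u i2 * w i1,
      cross u w i1 = u i2 * w i0 - u i0 * w i2
    & cross u w i2 = u i0 * w i1 - u i1 * w i0].
Proof. by rewrite !ffunE /= inordK. Qed.

Lemma dotC u w : dot u w = dot w u.
Proof. by rewrite !dotE; ring. Qed.

Lemma dot_scalevl c u w : dot (scalev c u) w = c * dot u w.
Proof. by rewrite !dotE !ffunE; ring. Qed.

Lemma dot_crossl u w : dot u (cross u w) = 0.
Proof. by rewrite dotE; have [-> -> ->] := crossE u w; ring. Qed.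

Lemma dot_crossr u w : dot w (cross u w) = 0.
Proof. by rewrite dotE; have [-> -> ->] := crossE u w; ring. Qed.

Lemma cross_cross x u w i :
  cross x (cross u w) i = dot x w * u i - dot x u * w i.
Proof.
have [c0 c1 c2] := crossE u w.
have [d0 d1 d2] := crossE x (cross u w).
by rewrite !dotE; move: i; apply: ord3P; rewrite ?d0 ?d1 ?d2 ?c0 ?c1 ?c2; ring.
Qed.

Lemma cross_eq0_proportional u w : cross u w = 0 ->
  forall i j, u i * w j = u j * w i.
Proof.
move=> uw0; have [] := crossE u w; rewrite uw0 !ffunE.
move=> /esym/eqP; rewrite subr_eq0 => /eqP e0.
move=> /esym/eqP; rewrite subr_eq0 => /eqP e1.
move=> /esym/eqP; rewrite subr_eq0 => /eqP e2.
by apply: ord3P; apply: ord3P; rewrite // mulrC.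
Qed.

Lemma neq0_coord (u : V) : u != 0 -> exists j, u j != 0.
Proof.
move=> u_neq0; apply/existsP; apply: contraR u_neq0 => /existsPn u0.
by apply/eqP/ffunP => j; rewrite ffunE; apply/eqP/negbNE/u0.
Qed.

Lemma cross_eq0_scalev u w j : cross u w = 0 -> w j != 0 ->
  u = scalev (u j / w j) w.
Proof.
move=> uw0 wj_neq0; apply/ffunP => i.
by rewrite ffunE mulrAC -(cross_eq0_proportional uw0) mulfK.
Qed.

Lemma orthogonal_cross x u w : dot x u = 0 -> dot x w = 0 -> cross u w != 0 ->
  exists s, x = scalev s (cross u w).
Proof.
move=> xu xw /neq0_coord [j cj]; exists (x j / cross u w j).
apply: cross_eq0_scalev cj; apply/ffunP => i.
by rewrite cross_cross xu xw !mul0r subrr ffunE.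
Qed.

End Vectors.

Section ProjectivePlane.
Variable F : finFieldType.
Local Notation V := {ffun 'I_3 -> F}.

Lemma normbP (u : V) : normb u ->
  exists i, u i = 1 /\ forall j : 'I_3, (j < i)%N -> u j = 0.
Proof.
case/existsP => i /andP[/eqP ui /forallP u0]; exists i; split => // j ji.
by apply/eqP; exact: implyP (u0 j) ji.
Qed.

Lemma normb_neq0 (u : V) : normb u -> u != 0.
Proof.
case/normbP => i [ui _]; apply: contra_eq_neq ui => ->.
by rewrite ffunE eq_sym oner_neq0.
Qed.

Lemma normb_scalev_eq (u w : V) c : normb u -> normb w -> u = scalev c w -> u = w.
Proof.
move=> /normbP [i [ui u0]] /normbP [i' [wi w0]] uw.
have uwE j : u j = c * w j by rewrite uw ffunE.
have ii' : i = i'.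
  case: (ltngtP i i') => [lt|lt|/val_inj //].
  - by move: (uwE i); rewrite ui w0 // mulr0 => /eqP; rewrite oner_eq0.
  - move: (uwE i'); rewrite u0 // wi mulr1 => c0.
    by move: (uwE i); rewrite ui -c0 mul0r => /eqP; rewrite oner_eq0.
subst i'; have c1 : c = 1 by move: (uwE i); rewrite ui wi mulr1.
by rewrite uw c1; apply/ffunP => j; rewrite ffunE mul1r.
Qed.

Lemma pt_scalev_inj (P P' : pt F) c : val P = scalev c (val P') -> P = P'.
Proof. by move=> /(normb_scalev_eq (valP P) (valP P')) /val_inj. Qed.

Lemma cross_pt_neq0 (P P' : pt F) : P != P' -> cross (val P) (val P') != 0.
Proof.
apply: contra_neq => cross0; have [j P'j] := neq0_coord (normb_neq0 (valP P')).
exact: pt_scalev_inj (cross_eq0_scalev cross0 P'j).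
Qed.

Lemma exists_pt_scalev (v : V) : v != 0 ->
  exists P : pt F, exists2 c, c != 0 & val P = scalev c v.
Proof.
move=> /neq0_coord [j vj].
have ex_nz : exists n, (n < 3)%N && (v (inord n) != 0).
  by exists j; rewrite ltn_ord inord_val.
case: (ex_minnP ex_nz) => n /andP[n_lt vn] n_min.
have vi_neq0 : (v (inord n))^-1 != 0 by rewrite invr_eq0.
suff nv : normb (scalev (v (inord n))^-1 v).
  by exists (exist (@normb F) _ nv), (v (inord n))^-1.
apply/existsP; exists (inord n); rewrite ffunE mulVf // eqxx /=.
apply/forallP => k; apply/implyP; rewrite inordK // => kn; rewrite ffunE.
have := n_min k; rewrite ltn_ord inord_val /= leqNgt kn.
by case: eqP => [->|_ /(_ isT)//]; rewrite mulr0.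
Qed.

Lemma on_lineE (l : line F) (P : pt F) : on_line l P = (dot (val l) (val P) == 0).
Proof. by []. Qed.

Lemma on_line_dot (l : line F) (P : pt F) : on_line l P -> dot (val l) (val P) = 0.
Proof. exact: eqP. Qed.

Lemma line_uniq (l l' : line F) (P P' : pt F) : P != P' ->
  on_line l P -> on_line l P' -> on_line l' P -> on_line l' P' -> l = l'.
Proof.
rewrite !on_lineE => PP' /eqP lP /eqP lP' /eqP l'P /eqP l'P'.
have cr_neq0 := cross_pt_neq0 PP'.
have [s lE] := orthogonal_cross lP lP' cr_neq0.
have [s' l'E] := orthogonal_cross l'P l'P' cr_neq0.
have s'_neq0 : s' != 0.
  apply: contraNneq (normb_neq0 (valP l')) => s'0.
  by rewrite l'E s'0; apply/eqP/ffunP => i; rewrite !ffunE mul0r.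
apply: (pt_scalev_inj (c := s / s')); apply/ffunP => i.
by rewrite lE l'E !ffunE mulrA divfK.
Qed.

Lemma notin_second_line (l l' : line F) (P P' : pt F) : l != l' -> P != P' ->
  on_line l P -> on_line l' P -> on_line l' P' -> ~~ on_line l P'.
Proof.
move=> ll' PP' lP l'P l'P'; apply: contra ll' => lP'.
by apply/eqP; exact: line_uniq PP' lP lP' l'P l'P'.
Qed.

Lemma exists_line_through (P P' : pt F) : P != P' ->
  exists l : line F, on_line l P && on_line l P'.
Proof.
move=> /cross_pt_neq0 /exists_pt_scalev [l [c _ lE]]; exists l.
by rewrite !on_lineE lE !dot_scalevl dotC dot_crossl dotC dot_crossr mulr0 eqxx.
Qed.

Lemma cross_coord (k : 'I_3) :
  exists x y, forall u w : V, cross u w k = u x * w y - u y * w x.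
Proof.
by move: k; apply: ord3P; [exists i1, i2 | exists i2, i0 | exists i0, i1];
  move=> u w; have [] := crossE u w.
Qed.

Lemma card_on_line (l : line F) : (#|[set P | on_line l P]| <= #|F|.+1)%N.
Proof.
have [k lk] := neq0_coord (normb_neq0 (valP l)).
have [x [y crossk]] := cross_coord k.
pose slope (P : pt F) := if val P x == 0 then None else Some (val P y / val P x).
suff slope_inj : {in [set P | on_line l P] &, injective slope}.
  by rewrite -(card_in_imset slope_inj) (leq_trans (max_card _)) // card_option.
move=> P P'; rewrite !inE !on_lineE => /eqP lP /eqP lP' sPP'.
apply/eqP; apply: contraT => PP'.
have [s lE] := orthogonal_cross lP lP' (cross_pt_neq0 PP').
suff crossk0 : cross (val P) (val P') k = 0.
  by move: lk; rewrite lE ffunE crossk0 mulr0 eqxx.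
move: sPP'; rewrite crossk /slope.
case: eqP => [Px0|/eqP Px]; case: eqP => [P'x0|/eqP P'x] //.
  by rewrite Px0 P'x0 !mul0r mulr0 subrr.
case=> /(congr1 (fun z => z * val P x * val P' x)) /=.
by rewrite divfK // mulrAC divfK // => yx; rewrite yx mulrC subrr.
Qed.

Lemma card_lines_through (P : pt F) :
  (#|[set l : line F | on_line l P]| <= #|F|.+1)%N.
Proof.
rewrite (eq_card (B := [set l : line F | on_line P l])) ?card_on_line // => l.
by rewrite !inE !on_lineE dotC.
Qed.

End ProjectivePlane.

Section HomogeneousSums.
Variable F : finFieldType.
Local Notation V := {ffun 'I_3 -> F}.
Local Notation q := #|F|.

Definition evalv (p : {mpoly F[3]}) (v : V) : F := p.@[fun i => v i].

Lemma evalv_linform (l : line F) v : evalv (linform l) v = dot (val l) v.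
Proof.
rewrite /evalv /linform /dot (big_morph _ (mevalD _) (meval0 _)).
by apply: eq_bigr => i _; rewrite mevalZ mevalXU.
Qed.

Lemma linform_homog (l : line F) : linform l \is 1.-homog.
Proof.
apply: rpred_sum => i _; apply: dhomogZ.
by rewrite dhomogX; apply/mdeg1P; exists i.
Qed.

Lemma evalvM p r v : evalv (p * r) v = evalv p v * evalv r v.
Proof. exact: rmorphM. Qed.

Lemma evalv_scalev p d c v : p \is d.-homog ->
  evalv p (scalev c v) = c ^+ d * evalv p v.
Proof.
move=> /dhomogP p_homog; rewrite /evalv !mevalE mulr_sumr big_seq [RHS]big_seq.
apply: eq_bigr => m m_supp; rewrite mulrCA; congr (_ * _).
under eq_bigr do rewrite ffunE exprMn.
by rewrite big_split /= prodrXr -mdegE p_homog.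
Qed.

Lemma evalv0 p d : p \is d.-homog -> (0 < d)%N -> evalv p 0 = 0.
Proof.
move=> p_homog d_gt0; have -> : (0 : V) = scalev 0 0.
  by apply/ffunP => i; rewrite !ffunE mul0r.
by rewrite (evalv_scalev _ _ p_homog) expr0n eqn0Ngt d_gt0 mul0r.
Qed.

(* Chevalley's argument: each monomial of degree < 3(q-1) has an exponent
   < q-1, whose power sum over F vanishes. *)
Lemma sum_evalv_homog p d : p \is d.-homog -> (d < 3 * q.-1)%N ->
  \sum_(v : V) evalv p v = 0.
Proof.
move=> /dhomogP p_homog d_lt; rewrite /evalv.
under eq_bigr do rewrite mevalE.
rewrite exchange_big big_seq /=; apply: big1 => m m_supp.
rewrite -mulr_sumr.
have -> : \sum_(v : V) \prod_i v i ^+ m i = \prod_(i < 3) \sum_(x : F) x ^+ m i.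
  by rewrite bigA_distr_bigA.
have [i mi] : exists i : 'I_3, (m i < q.-1)%N.
  apply/existsP; apply: contraLR d_lt => /existsPn m_ge.
  rewrite -leqNgt -(p_homog m m_supp) /= mdegE !big_ord_recl big_ord0 addn0.
  by rewrite mulSn mul2n -addnn !leq_add // leqNgt m_ge.
by rewrite (bigD1 i) //= sum_expr_eq0 // mul0r mulr0.
Qed.

Lemma sum_vec_neq0 (R : nmodType) (f : V -> R) :
  \sum_(v : V | v != 0) f v =
  \sum_(P : pt F) \sum_(c : F | c != 0) f (scalev c (val P)).
Proof.
pose D := [set x : pt F * F | x.2 != 0].
pose phi (x : pt F * F) := scalev x.2 (val x.1).
have phi_inj : {in D &, injective phi}.
  move=> [P c] [P' c']; rewrite !inE /phi /= => c_neq0 c'_neq0 PcE.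
  have PP' : P = P'.
    apply: (pt_scalev_inj (c := c' / c)); apply/ffunP => i.
    move/ffunP/(_ i): PcE; rewrite !ffunE => /(canRL (mulKf c_neq0)) ->.
    by rewrite mulrA [c^-1 * _]mulrC.
  subst P'; have [j Pj] := neq0_coord (normb_neq0 (valP P)).
  by move/ffunP/(_ j): PcE; rewrite !ffunE => /(mulIf Pj) ->.
have imD : [set v : V | v != 0] = phi @: D.
  apply/setP => v; rewrite inE; apply/idP/imsetP => [v_neq0|].
    have [P [c c_neq0 PE]] := exists_pt_scalev v_neq0.
    exists (P, c^-1); rewrite ?inE ?invr_eq0 //; apply/ffunP => i.
    by rewrite !ffunE PE ffunE mulKf.
  case=> -[P c]; rewrite inE /= => c_neq0 ->.
  apply: contraNneq (normb_neq0 (valP P)) => /ffunP Pc0; apply/eqP/ffunP => i.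
  by have := Pc0 i; rewrite !ffunE => /eqP; rewrite mulf_eq0 (negbTE c_neq0) => /eqP.
rewrite -big_set /= imD (big_imset _ phi_inj) /= pair_big_dep.
by apply: eq_bigl => -[P c]; rewrite inE.
Qed.

(* The q - 1 representatives of a point contribute (q - 1) = -1 times its
   value. *)
Lemma sum_evalv_pt_homog p d : p \is d.-homog -> (0 < d < 3 * q.-1)%N ->
  (q.-1 %| d)%N -> \sum_(P : pt F) evalv p (val P) = 0.
Proof.
move=> p_homog /andP[d_gt0 d_lt] /dvdnP[k dE].
have := sum_evalv_homog p_homog d_lt.
rewrite (bigD1 (0 : V)) //= (evalv0 p_homog d_gt0) add0r sum_vec_neq0 => sum0.
have inner (P : pt F) :
    \sum_(c | c != 0) evalv p (scalev c (val P)) = - evalv p (val P).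
  rewrite (eq_bigr (fun=> evalv p (val P))) => [|c c_neq0]; last first.
    by rewrite (evalv_scalev _ _ p_homog) dE mulnC exprM expf_card_pred // expr1n mul1r.
  by rewrite sumr_const cardC1 -mulr_natr natr_card_pred mulrN1.
move: sum0; rewrite (eq_bigr _ (fun P _ => inner P)) sumrN.
by move=> /eqP; rewrite oppr_eq0 => /eqP.
Qed.

Lemma evalv_pt_homog_eq0 p d (P0 : pt F) : p \is d.-homog ->
  (0 < d < 3 * q.-1)%N -> (q.-1 %| d)%N ->
  (forall P : pt F, P != P0 -> evalv p (val P) = 0) -> evalv p (val P0) = 0.
Proof.
move=> p_homog d_bounds d_dvd p0.
have := sum_evalv_pt_homog p_homog d_bounds d_dvd.
by rewrite (bigD1 P0) //= big1 ?addr0.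
Qed.

End HomogeneousSums.

Lemma dhomog_prod_linear (n : nat) (R : nzRingType) (I : finType) (A : {pred I})
    (f : I -> {mpoly R[n]}) :
  (forall i, f i \is 1.-homog) -> \prod_(i in A) f i \is #|A|.-homog.
Proof.
move=> f_homog; rewrite -sum1_card.
elim/big_rec2: _ => [|i k p _ p_homog]; first exact: dhomog1.
exact: dhomogM (f_homog i) p_homog.
Qed.

Section PsiLines.
Variables (F : finFieldType) (C : {mpoly F[3]}) (Q : pt F).
Hypotheses (C_homog : C \is #|F|.-1.-homog) (ZQ : Q \in Zpts C).
Local Notation q := #|F|.
Local Notation psi_lines := (lines_psi C q.-1 Q).

Lemma ZptsE P : (P \in Zpts C) = (evalv C (val P) != 0).
Proof. by rewrite /Zpts in_setC inE. Qed.

(* Otherwise the q - 1 points on the curve, Q, P and P' would exceed the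
   q + 1 points of l. *)
Lemma psi_line_Zpts_uniq l P P' : l \in psi_lines ->
  on_line l P -> on_line l P' -> P != Q -> P' != Q ->
  P \in Zpts C -> P' \in Zpts C -> P = P'.
Proof.
rewrite inE => /andP[lQ /eqP card_lX] lP lP' PQ P'Q ZP ZP'.
apply/eqP; apply: contraT => PP'.
set X := [set R in Xpts C | on_line l R].
have notX R : R \in Zpts C -> R \notin X by rewrite /Zpts in_setC !inE => /negbTE ->.
have sub : Q |: (P |: (P' |: X)) \subset [set R | on_line l R].
  apply/subsetP => R; rewrite !in_setU1 !inE.
  by case/or4P => [/eqP->|/eqP->|/eqP->|/andP[]].
have := leq_trans (subset_leq_card sub) (card_on_line l).
rewrite !cardsU1 card_lX !in_setU1 !(negbTE (notX _ _)) //.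
rewrite ![Q == _]eq_sym (negbTE PQ) (negbTE P'Q) (negbTE PP') /= !add1n.
by rewrite prednK ?ltnn // ltnW // card_finNzRing_gt1.
Qed.

Lemma psi_line_through l : l \in psi_lines -> on_line l Q.
Proof. by rewrite inE => /andP[]. Qed.

Section ThreeLines.
Hypothesis q_ge3 : (3 <= q)%N.
Variables (la lb lc m : line F) (Pa Pb Pc : pt F).
Hypotheses (la_psi : la \in psi_lines) (lb_psi : lb \in psi_lines).
Hypothesis lc_psi : lc \in psi_lines.
Hypotheses (la_lb : la != lb) (la_lc : la != lc) (lb_lc : lb != lc).
Hypotheses (laPa : on_line la Pa) (lbPb : on_line lb Pb) (lcPc : on_line lc Pc).
Hypotheses (PaQ : Pa != Q) (PbQ : Pb != Q) (PcQ : Pc != Q).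
Hypotheses (ZPa : Pa \in Zpts C) (ZPb : Pb \in Zpts C) (ZPc : Pc \in Zpts C).
Hypotheses (mPa : on_line m Pa) (mPb : on_line m Pb).

Let other_lines := [set l : line F | on_line l Q] :\: [set la; lb; lc].

Lemma card_other_lines : (#|other_lines| <= q.-2)%N.
Proof.
have abc_Q : [set la; lb; lc] \subset [set l : line F | on_line l Q].
  by apply/subsetP => l; rewrite !inE -orbA => /or3P[] /eqP ->;
    apply: psi_line_through.
rewrite cardsD (setIidPr abc_Q) -setUA cardsU1 cards2 !inE negb_or.
rewrite la_lb la_lc lb_lc.
rewrite leq_subLR; have := card_lines_through Q.
by case: #|F| q_ge3 => [|[|[|k]]].
Qed.

Let e := (q.-2 - #|other_lines|)%N.
Let H := linform la ^+ e * \prod_(l in other_lines) linform l.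

Lemma H_homog : H \is q.-2.-homog.
Proof.
have := dhomogM (dhomogMn e (linform_homog la))
  (dhomog_prod_linear other_lines (@linform_homog F)).
by rewrite mul1n subnK // card_other_lines.
Qed.

Lemma evalv_H (P : pt F) : evalv H (val P) =
  dot (val la) (val P) ^+ e * \prod_(l in other_lines) dot (val l) (val P).
Proof.
rewrite evalvM /evalv rmorphXn rmorph_prod /= -!/(evalv _ _) evalv_linform.
by congr (_ * _); apply: eq_bigr => l _; exact: evalv_linform.
Qed.

Lemma H_Q : evalv H (val Q) = 0.
Proof.
rewrite evalv_H; case: (set_0Vmem other_lines) => [L0 | [l lL]].
  rewrite /e L0 cards0 subn0 (on_line_dot (psi_line_through la_psi)) expr0n.
  by rewrite -(subnK q_ge3) addn3 /= mul0r.
have lQ : on_line l Q by move: lL; rewrite !inE => /andP[].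
by rewrite (bigD1 l) //= (on_line_dot lQ) mul0r mulr0.
Qed.

Lemma H_Pc_neq0 : evalv H (val Pc) != 0.
Proof.
have Q_Pc : Q != Pc by rewrite eq_sym.
have off_Pc l : l != lc -> on_line l Q -> dot (val l) (val Pc) != 0.
  move=> llc lQ.
  exact: notin_second_line llc Q_Pc lQ (psi_line_through lc_psi) lcPc.
rewrite evalv_H mulf_neq0 ?expf_neq0 ?off_Pc ?psi_line_through //.
rewrite prodf_seq_neq0; apply/allP => l _; apply/implyP; rewrite !inE.
case/andP=> l_abc lQ; apply: off_Pc lQ.
by apply: contraNneq l_abc => ->; rewrite eqxx orbT.
Qed.

Let G := C * linform m * H.

Lemma G_homog : G \is (q.-1 * 2).-homog.
Proof.
have -> : (q.-1 * 2 = q.-1 + 1 + q.-2)%N.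
  by case: #|F| q_ge3 => [|[|[|k]]] // _; rewrite muln2 -addnn addn1 !addSn !addnS.
exact: dhomogM (dhomogM C_homog (linform_homog m)) H_homog.
Qed.

Lemma G_vanishes P : P != Pc -> evalv G (val P) = 0.
Proof.
move=> PPc; rewrite 2!evalvM.
have [ZP|] := boolP (P \in Zpts C); last first.
  by rewrite ZptsE negbK => /eqP ->; rewrite !mul0r.
have [->|PQ] := eqVneq P Q; first by rewrite H_Q mulr0.
have QP : Q != P by rewrite eq_sym.
have [l /andP[lQ lP]] := exists_line_through QP.
have [lL|] := boolP (l \in other_lines).
  by rewrite evalv_H (bigD1 l) //= (on_line_dot lP) !mul0r !mulr0.
rewrite !inE lQ andbT negbK -orbA => /or3P[] /eqP lE; subst l.
- rewrite (psi_line_Zpts_uniq la_psi lP laPa) // evalv_linform.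
  by rewrite (on_line_dot mPa) mulr0 mul0r.
- rewrite (psi_line_Zpts_uniq lb_psi lP lbPb) // evalv_linform.
  by rewrite (on_line_dot mPb) mulr0 mul0r.
- by rewrite (psi_line_Zpts_uniq lc_psi lP lcPc) ?eqxx in PPc.
Qed.

Lemma three_psi_lines_collinear : on_line m Pc.
Proof.
have q_gt1 : (1 < q.-1)%N by rewrite -subn1 ltn_subRL.
have := evalv_pt_homog_eq0 G_homog _ (dvdn_mulr _ (dvdnn _)) G_vanishes.
rewrite muln_gt0 (ltnW q_gt1) mulnC ltn_mul2r (ltnW q_gt1) => /(_ isT).
rewrite 2!evalvM evalv_linform => /eqP; rewrite !mulf_eq0 (negbTE H_Pc_neq0).
by rewrite orbF; move: ZPc; rewrite ZptsE => /negbTE ->.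
Qed.

End ThreeLines.

Lemma psi_Zpts_on_line (la lb m : line F) (Pa Pb : pt F) : (3 <= q)%N ->
  la \in psi_lines -> lb \in psi_lines -> la != lb ->
  on_line la Pa -> on_line lb Pb -> Pa != Q -> Pb != Q ->
  Pa \in Zpts C -> Pb \in Zpts C -> on_line m Pa -> on_line m Pb ->
  forall l P, l \in psi_lines -> on_line l P -> P != Q -> P \in Zpts C ->
  on_line m P.
Proof.
move=> q_ge3 la_psi lb_psi la_lb laPa lbPb PaQ PbQ ZPa ZPb mPa mPb l P l_psi lP PQ ZP.
have [la_l | la_l] := eqVneq la l.
  by subst l; rewrite (psi_line_Zpts_uniq la_psi lP laPa).
have [lb_l | lb_l] := eqVneq lb l.
  by subst l; rewrite (psi_line_Zpts_uniq lb_psi lP lbPb).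
exact: (three_psi_lines_collinear q_ge3 la_psi lb_psi l_psi la_lb la_l lb_l (m := m)
  laPa lbPb lP PaQ PbQ PQ ZPa ZPb ZP mPa mPb).
Qed.

Lemma psi_Zpts_collinear : (3 <= q)%N ->
  exists m : line F, forall l P, l \in psi_lines -> on_line l P -> P != Q ->
    P \in Zpts C -> on_line m P.
Proof.
move=> q_ge3.
pose R := [set P | [exists l in psi_lines, on_line l P] && (P != Q) && (P \in Zpts C)].
suff [m mR] : exists m : line F, forall P, P \in R -> on_line m P.
  exists m => l P l_psi lP PQ ZP; apply: mR; rewrite inE PQ ZP !andbT.
  by apply/exists_inP; exists l.
case: (set_0Vmem R) => [R0 | [Pa]]; first by exists Q => P; rewrite R0 inE.
rewrite inE => /andP[/andP[/exists_inP[la la_psi laPa] PaQ] ZPa].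
case: (set_0Vmem (R :\ Pa)) => [R1 | [Pb]].
  exists la => P RP; have : P \notin R :\ Pa by rewrite R1 inE.
  by rewrite in_setD1 RP andbT negbK => /eqP ->.
rewrite in_setD1 inE => /andP[PbPa /andP[/andP[/exists_inP[lb lb_psi lbPb] PbQ] ZPb]].
have la_lb : la != lb.
  apply: contraNneq PbPa => lab; apply/eqP.
  by apply: (psi_line_Zpts_uniq la_psi _ laPa) => //; rewrite lab.
have PaPb : Pa != Pb by rewrite eq_sym.
have [m /andP[mPa mPb]] := exists_line_through PaPb.
exists m => P; rewrite inE => /andP[/andP[/exists_inP[l l_psi lP] PQ] ZP].
exact: psi_Zpts_on_line la_psi lb_psi la_lb laPa lbPb PaQ PbQ ZPa ZPb mPa mPb
  l P l_psi lP PQ ZP.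
Qed.

End PsiLines.

Theorem corollary3p9 (F : finFieldType) (C : {mpoly F[3]}) (Q : pt F) :
  (5 <= #|F|)%N ->
  plane_curve (#|F|.-1) C ->
  no_Fq_linear_components C ->
  Nq C = (#|F|.-1 ^ 2)%N ->
  Q \in Zpts C ->
  (2 <= psi C (#|F|.-1) Q)%N ->
  exists m : line F,
    forall (l : line F) (P : pt F),
      l \in lines_psi C (#|F|.-1) Q ->
      on_line l P -> P != Q -> P \in Zpts C -> on_line m P.
Proof.
move=> q_ge5 [_ C_homog] _ _ ZQ _.
exact: psi_Zpts_collinear C_homog ZQ (leq_trans _ q_ge5).
Qed.
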